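(* Consider the planar system $$\frac{dN}{dt}=rN\left(1-\frac{N}{K}-\frac{h}{w+N}\right)-\frac{aNP}{b+N^2},\qquad \frac{dP}{dt}=\frac{cNP}{b+N^2}-\delta P,$$ where $r,K,h,w,a,b,c,\delta$ are positive constants with $w<K$. Let $D_2=c^2-4b\delta^2$, $N_4=\frac{c+\sqrt{D_2}}{2\delta}$, $N_5=\frac{c-\sqrt{D_2}}{2\delta}$, $N_6=\frac{c}{2\delta}$, and for $N>0$ let $$P(N)=\frac{r(b+N^2)\left[(K-w)N-K(h-w)-N^2\right]}{Ka(w+N)}.$$ (i) If $b>\left(\frac{c}{2\delta}\right)^2$, then there are no coexistence equilibrium points. (ii) If $b=\left(\frac{c}{2\delta}\right)^2$ and $P(N_6)>0$, then there is exactly one coexistence equilibrium point, namely $E_6=(N_6,P(N_6))$. (iii) If $b<\left(\frac{c}{2\delta}\right)^2$, $P(N_4)>0$ and $P(N_5)>0$, then there are two coexistence equilibrium points, namely $E_4=(N_4,P(N_4))$ and $E_5=(N_5,P(N_5))$.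
   Context: $N(t)$ is the prey density and $P(t)$ the predator density. A coexistence equilibrium point is an equilibrium $(N,P)$ of the system with $N>0$ and $P>0$. *)

From Stdlib Require Import Reals.
Open Scope R_scope.

Definition fN (r K h w a b : R) (N P : R) : R :=
  r * N * (1 - N / K - h / (w + N)) - a * N * P / (b + N ^ 2).

Definition fP (b c delta : R) (N P : R) : R :=
  c * N * P / (b + N ^ 2) - delta * P.

Definition is_equilibrium (r K h w a b c delta : R) (N P : R) : Prop :=
  fN r K h w a b N P = 0 /\ fP b c delta N P = 0.

Definition is_coexistence_eq (r K h w a b c delta : R) (N P : R) : Prop :=
  0 < N /\ 0 < P /\ is_equilibrium r K h w a b c delta N P.

Definition D2 (b c delta : R) : R := c ^ 2 - 4 * b * delta ^ 2.
Definition N4 (b c delta : R) : R := (c + sqrt (D2 b c delta)) / (2 * delta).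
Definition N5 (b c delta : R) : R := (c - sqrt (D2 b c delta)) / (2 * delta).
Definition N6 (c delta : R) : R := c / (2 * delta).

Definition Pfun (r K h w a b : R) (N : R) : R :=
  r * (b + N ^ 2) * ((K - w) * N - K * (h - w) - N ^ 2) / (K * a * (w + N)).

(* An interior equilibrium must make the predator's per-capita growth vanish,
   which (after clearing the positive denominator b + N^2) says that N is a root
   of the quadratic delta N^2 - c N + delta b, whose discriminant is D2; the prey
   equation then forces P = P(N).  So the coexistence equilibria are exactly the
   points (N, P(N)) with N a root of that quadratic and P(N) > 0: none when
   D2 < 0, the double root N6 when D2 = 0, and the two roots N4, N5 (both
   positive, as their product is b and their sum c/delta) when D2 > 0. *)
From Stdlib Require Import Reals Lra Psatz.
Open Scope R_scope.

Definition predator_nullcline (b c delta N : R) : R :=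
  delta * N ^ 2 - c * N + delta * b.

Lemma fP_eq0_iff b c delta N P : 0 < b -> P <> 0 ->
  fP b c delta N P = 0 <-> predator_nullcline b c delta N = 0.
Proof.
  intros hb hP.
  assert (hB : b + N ^ 2 <> 0) by nra.
  assert (E : fP b c delta N P * (b + N ^ 2) = - P * predator_nullcline b c delta N)
    by (unfold fP, predator_nullcline; field; exact hB).
  split; intro H.
  - rewrite H, Rmult_0_l in E. symmetry in E.
    apply Rmult_integral in E as [E | E]; lra.
  - rewrite H, Rmult_0_r in E.
    apply Rmult_integral in E as [E | E]; [exact E | contradiction].
Qed.

Lemma fN_eq0_iff r K h w a b N P :
  0 < b -> K <> 0 -> a <> 0 -> N <> 0 -> w + N <> 0 ->
  fN r K h w a b N P = 0 <-> P = Pfun r K h w a b N.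
Proof.
  intros hb hK ha hN hwN.
  assert (hB : b + N ^ 2 <> 0) by nra.
  assert (E : fN r K h w a b N P * (b + N ^ 2) = a * N * (Pfun r K h w a b N - P))
    by (unfold fN, Pfun; field; tauto).
  assert (haN : a * N <> 0) by (apply Rmult_integral_contrapositive; tauto).
  split; intro H.
  - rewrite H, Rmult_0_l in E. symmetry in E.
    apply Rmult_integral in E as [E | E]; [contradiction | lra].
  - subst P. rewrite Rminus_diag, Rmult_0_r in E.
    apply Rmult_integral in E as [E | E]; [exact E | contradiction].
Qed.

Section Coexistence.

Variables r K h w a b c delta : R.
Hypotheses (hK : 0 < K) (hw : 0 < w) (ha : 0 < a) (hb : 0 < b).

Lemma coexistence_eq_iff N P :
  is_coexistence_eq r K h w a b c delta N P <->
  0 < N /\ 0 < P /\ predator_nullcline b c delta N = 0 /\ P = Pfun r K h w a b N.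
Proof.
  unfold is_coexistence_eq, is_equilibrium.
  split; intros (hN & hP & H1 & H2); repeat split; try assumption.
  - apply (fP_eq0_iff b c delta N P); lra.
  - apply (fN_eq0_iff r K h w a b N P); lra.
  - apply (fN_eq0_iff r K h w a b N P); lra.
  - apply (fP_eq0_iff b c delta N P); lra.
Qed.

Lemma coexistence_eq_at_root N :
  0 < N -> predator_nullcline b c delta N = 0 -> 0 < Pfun r K h w a b N ->
  is_coexistence_eq r K h w a b c delta N (Pfun r K h w a b N).
Proof. intros. apply coexistence_eq_iff; auto. Qed.

End Coexistence.

Lemma predator_nullcline_vertex b c delta N : delta <> 0 ->
  predator_nullcline b c delta N
  = delta * ((N - N6 c delta) ^ 2 + (b - N6 c delta ^ 2)).
Proof. intro hd. unfold predator_nullcline, N6. field. exact hd. Qed.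

Lemma predator_nullcline_neq0 b c delta N :
  0 < delta -> N6 c delta ^ 2 < b -> predator_nullcline b c delta N <> 0.
Proof.
  intros hd hb. rewrite predator_nullcline_vertex by lra.
  pose proof (pow2_ge_0 (N - N6 c delta)).
  apply Rmult_integral_contrapositive; split; lra.
Qed.

Lemma predator_nullcline_eq0_double b c delta N :
  delta <> 0 -> b = N6 c delta ^ 2 ->
  predator_nullcline b c delta N = 0 <-> N = N6 c delta.
Proof.
  intros hd hb. rewrite predator_nullcline_vertex, hb, Rminus_diag, Rplus_0_r by exact hd.
  split; intro H.
  - apply Rmult_integral in H as [H | H]; [contradiction|].
    nra.
  - rewrite H, Rminus_diag. ring.
Qed.

Lemma D2_pos b c delta : 0 < delta -> b < N6 c delta ^ 2 -> 0 < D2 b c delta.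
Proof.
  intros hd hb.
  replace (D2 b c delta) with (4 * delta ^ 2 * (N6 c delta ^ 2 - b))
    by (unfold D2, N6; field; lra).
  apply Rmult_lt_0_compat; [nra | lra].
Qed.

Section TwoRoots.

Variables b c delta : R.
Hypotheses (hd : 0 < delta) (hD : 0 <= D2 b c delta).

Let sqrt_D2_sq : sqrt (D2 b c delta) * sqrt (D2 b c delta) = D2 b c delta.
Proof. exact (sqrt_sqrt _ hD). Qed.

Lemma N4_mul_N5 : N4 b c delta * N5 b c delta = b.
Proof.
  unfold N4, N5.
  transitivity ((c ^ 2 - sqrt (D2 b c delta) * sqrt (D2 b c delta)) / (4 * delta ^ 2));
    [field; lra|].
  rewrite sqrt_D2_sq. unfold D2. field. lra.
Qed.

Lemma N4_add_N5 : delta * (N4 b c delta + N5 b c delta) = c.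
Proof. unfold N4, N5. field. lra. Qed.

Lemma predator_nullcline_factor N :
  predator_nullcline b c delta N
  = delta * ((N - N4 b c delta) * (N - N5 b c delta)).
Proof.
  unfold predator_nullcline.
  rewrite <- N4_mul_N5 at 1. rewrite <- N4_add_N5 at 1. ring.
Qed.

Lemma predator_nullcline_eq0_pair N :
  predator_nullcline b c delta N = 0 <-> N = N4 b c delta \/ N = N5 b c delta.
Proof.
  rewrite predator_nullcline_factor. split.
  - intro H. apply Rmult_integral in H as [H | H]; [lra|].
    apply Rmult_integral in H as [H | H]; [left | right]; lra.
  - intros [-> | ->]; ring.
Qed.

Lemma N4_pos : 0 < c -> 0 < N4 b c delta.
Proof.
  intro hc. pose proof (sqrt_pos (D2 b c delta)).
  unfold N4. apply Rdiv_lt_0_compat; lra.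
Qed.

Lemma N5_pos : 0 < b -> 0 < c -> 0 < N5 b c delta.
Proof.
  intros hb hc. pose proof N4_pos hc. pose proof N4_mul_N5. nra.
Qed.

Lemma N4_neq_N5 : 0 < D2 b c delta -> N4 b c delta <> N5 b c delta.
Proof.
  intros hD' E. pose proof (sqrt_lt_R0 _ hD').
  unfold N4, N5 in E. apply (Rmult_eq_compat_r (2 * delta)) in E.
  field_simplify in E; lra.
Qed.

End TwoRoots.

Theorem theorem3 (r K h w a b c delta : R)
  (hr : 0 < r) (hK : 0 < K) (hh : 0 < h) (hw : 0 < w) (ha : 0 < a)
  (hb : 0 < b) (hc : 0 < c) (hdelta : 0 < delta) (hwK : w < K) :
  (* (i) *)
  (b > (c / (2 * delta)) ^ 2 ->
     forall N P, ~ is_coexistence_eq r K h w a b c delta N P) /\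
  (* (ii) *)
  (b = (c / (2 * delta)) ^ 2 -> Pfun r K h w a b (N6 c delta) > 0 ->
     forall N P, is_coexistence_eq r K h w a b c delta N P <->
       (N = N6 c delta /\ P = Pfun r K h w a b (N6 c delta))) /\
  (* (iii) *)
  (b < (c / (2 * delta)) ^ 2 ->
     Pfun r K h w a b (N4 b c delta) > 0 -> Pfun r K h w a b (N5 b c delta) > 0 ->
     N4 b c delta <> N5 b c delta /\
     forall N P, is_coexistence_eq r K h w a b c delta N P <->
       ((N = N4 b c delta /\ P = Pfun r K h w a b (N4 b c delta)) \/
        (N = N5 b c delta /\ P = Pfun r K h w a b (N5 b c delta)))).
Proof.
  split; [|split].
  - intros hb6 N P (_ & _ & hN0 & _)%coexistence_eq_iff; auto.
    exact (predator_nullcline_neq0 b c delta N hdelta hb6 hN0).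
  - intros hb6 hP6 N P. split.
    + intros (_ & _ & hN0 & ->)%coexistence_eq_iff; auto.
      apply predator_nullcline_eq0_double in hN0; [|lra|exact hb6].
      now subst.
    + intros [-> ->]. apply coexistence_eq_at_root; auto.
      * unfold N6. apply Rdiv_lt_0_compat; lra.
      * apply predator_nullcline_eq0_double; [lra | exact hb6 | reflexivity].
  - intros hb6 hP4 hP5.
    pose proof (D2_pos b c delta hdelta hb6) as hD.
    split; [exact (N4_neq_N5 b c delta hdelta hD) | intros N P; split].
    + intros (_ & _ & hN0 & ->)%coexistence_eq_iff; auto.
      apply predator_nullcline_eq0_pair in hN0 as [-> | ->]; auto; lra.
    + intros [[-> ->] | [-> ->]]; apply coexistence_eq_at_root; auto;
        try (apply predator_nullcline_eq0_pair; auto; lra).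
      * apply N4_pos; lra.
      * apply N5_pos; lra.
Qed.
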